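(* Let $G$ be a group acting on a set $X$ on the left, and let $\mathfrak{F}$ be any family of subsets of $X$. Then the filter $\mathfrak{R}_{\mathfrak{F}}$ on $G$ is left topological.
   Context: For $A\in\mathfrak{F}$ let $\Delta_{\mathfrak{F}}(A)=\{g\in G: gB\subseteq A$ for some $B\in\mathfrak{F}$ with $B\subseteq A\}$ (note $e\in\Delta_{\mathfrak{F}}(A)$). $\mathfrak{R}_{\mathfrak{F}}$ is the filter on $G$ with base consisting of the sets $\bigcap_{A\in\mathfrak{F}'}\Delta_{\mathfrak{F}}(A)$, $\mathfrak{F}'$ a finite subfamily of $\mathfrak{F}$. A filter $\varphi$ on $G$ is left topological if there is a topology on $G$ in which every left shift $x\mapsto gx$ is continuous and for which $\varphi$ is the filter of neighbourhoods of the identity $e$ (i.e. $\varphi$ is a base at $e$). *)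

From Stdlib Require Import List.
Import ListNotations.

Definition is_group {G : Type} (mul : G -> G -> G) (inv : G -> G) (e : G) : Prop :=
  (forall a b c, mul a (mul b c) = mul (mul a b) c) /\
  (forall a, mul e a = a) /\ (forall a, mul a e = a) /\
  (forall a, mul (inv a) a = e) /\ (forall a, mul a (inv a) = e).

Definition is_left_action {G X : Type} (mul : G -> G -> G) (e : G)
  (act : G -> X -> X) : Prop :=
  (forall x, act e x = x) /\ (forall g h x, act (mul g h) x = act g (act h x)).

Definition Delta {G X : Type} (act : G -> X -> X) (F : (X -> Prop) -> Prop)
  (A : X -> Prop) : G -> Prop :=
  fun g => exists B, F B /\ (forall x, B x -> A x) /\ (forall x, B x -> A (act g x)).

(* The filter R_F on G generated by the base of finite intersections
   of the Delta_F(A), A ∈ F (the empty intersection being G). *)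
Definition R_filter {G X : Type} (act : G -> X -> X) (F : (X -> Prop) -> Prop)
  : (G -> Prop) -> Prop :=
  fun U => exists l : list (X -> Prop), Forall F l /\
     (forall g, (forall A, In A l -> Delta act F A g) -> U g).

Definition is_topology {T : Type} (O : (T -> Prop) -> Prop) : Prop :=
  O (fun _ => True) /\
  (forall U V, O U -> O V -> O (fun x => U x /\ V x)) /\
  (forall (I : Type) (U : I -> T -> Prop), (forall i, O (U i)) ->
       O (fun x => exists i, U i x)).

Definition continuous_for {T : Type} (O : (T -> Prop) -> Prop) (f : T -> T) : Prop :=
  forall U, O U -> O (fun x => U (f x)).

Definition nbhd {T : Type} (O : (T -> Prop) -> Prop) (p : T) (N : T -> Prop) : Prop :=
  exists U, O U /\ U p /\ (forall x, U x -> N x).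

Definition left_topological {G : Type} (mul : G -> G -> G) (e : G)
  (phi : (G -> Prop) -> Prop) : Prop :=
  exists O, is_topology O /\ (forall g, continuous_for O (mul g)) /\
    (forall N, phi N <-> nbhd O e N).

(* The open sets are the U with x^-1 U in phi for every x in U.  Shifts are
   continuous by associativity, and the only non-formal point is that every
   member of phi is a neighbourhood of e, i.e. contains an open set around e.
   For R_F this comes from the witness in the definition of Delta: if g B is
   inside A with B in F, then g h B' is inside A whenever h B' is inside B,
   so g Delta(B) is inside Delta(A). *)

From Stdlib Require Import List.
Import ListNotations.

Section LeftTopologicalFilter.
Variables (T : Type) (mul : T -> T -> T) (e : T) (phi : (T -> Prop) -> Prop).
Hypotheses (mulA : forall a b c, mul a (mul b c) = mul (mul a b) c)
  (mul1g : forall a, mul e a = a) (mulg1 : forall a, mul a e = a).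
Hypotheses (phi_top : phi (fun _ => True))
  (phi_and : forall U V, phi U -> phi V -> phi (fun x => U x /\ V x))
  (phi_mono : forall U V : T -> Prop, phi U -> (forall x, U x -> V x) -> phi V)
  (phi_e : forall U, phi U -> U e)
  (phi_shift : forall U, phi U -> phi (fun y => phi (fun z => U (mul y z)))).

Definition shift_open (U : T -> Prop) : Prop :=
  forall x, U x -> phi (fun z => U (mul x z)).

Lemma shift_open_topology : is_topology shift_open.
Proof.
split; [|split].
- intros x _; exact phi_top.
- intros U V HU HV x [Ux Vx]; apply phi_and; auto.
- intros I U HU x [i Uix].
  apply (phi_mono _ _ (HU i x Uix)); intros z Hz; exists i; exact Hz.
Qed.

Lemma shift_open_continuous (g : T) : continuous_for shift_open (mul g).
Proof.
intros U HU x Ux; apply (phi_mono _ _ (HU _ Ux)).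
intros z Hz; rewrite mulA; exact Hz.
Qed.

Lemma shift_open_interior (N : T -> Prop) :
  shift_open (fun y => phi (fun z => N (mul y z))).
Proof.
intros x Hx; apply (phi_mono _ _ (phi_shift _ Hx)).
intros y Hy; apply (phi_mono _ _ Hy); intros z Hz; rewrite <- mulA; exact Hz.
Qed.

Lemma phi_nbhdE (N : T -> Prop) : phi N <-> nbhd shift_open e N.
Proof.
split.
- intros HN; exists (fun y => phi (fun z => N (mul y z))).
  split; [apply shift_open_interior|split].
  + apply (phi_mono _ _ HN); intros z Hz; rewrite mul1g; exact Hz.
  + intros x Hx; rewrite <- (mulg1 x); exact (phi_e _ Hx).
- intros [U [HU [Ue UN]]]; apply (phi_mono _ _ (HU e Ue)).
  intros z Hz; rewrite mul1g in Hz; auto.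
Qed.

Lemma left_topological_filter : left_topological mul e phi.
Proof.
exists shift_open; split; [exact shift_open_topology|split].
- exact shift_open_continuous.
- exact phi_nbhdE.
Qed.

End LeftTopologicalFilter.

Section RFilter.
Variables (G X : Type) (mul : G -> G -> G) (e : G) (act : G -> X -> X)
  (F : (X -> Prop) -> Prop).
Hypotheses (act1 : forall x, act e x = x)
  (actM : forall g h x, act (mul g h) x = act g (act h x)).

Lemma R_filter_top : R_filter act F (fun _ => True).
Proof. exists []; split; [constructor|auto]. Qed.

Lemma R_filter_mono (U V : G -> Prop) :
  R_filter act F U -> (forall g, U g -> V g) -> R_filter act F V.
Proof. intros [l [Fl HU]] UV; exists l; split; auto. Qed.

Lemma R_filter_and (U V : G -> Prop) : R_filter act F U -> R_filter act F V ->
  R_filter act F (fun g => U g /\ V g).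
Proof.
intros [l [Fl HU]] [m [Fm HV]]; exists (l ++ m); split.
- exact (proj2 (Forall_app F l m) (conj Fl Fm)).
- intros g Hg; split; [apply HU|apply HV];
    intros A HA; apply Hg, in_or_app; auto.
Qed.

Lemma Delta_id (A : X -> Prop) : F A -> Delta act F A e.
Proof. intros FA; exists A; repeat split; auto; intros x Ax; rewrite act1; exact Ax. Qed.

Lemma R_filter_id (U : G -> Prop) : R_filter act F U -> U e.
Proof.
intros [l [Fl HU]]; apply HU; intros A HA.
apply Delta_id; exact (proj1 (Forall_forall F l) Fl A HA).
Qed.

Lemma Delta_mulr (A : X -> Prop) (g : G) : Delta act F A g ->
  exists B, F B /\ forall h, Delta act F B h -> Delta act F A (mul g h).
Proof.
intros [B [FB [BA gBA]]]; exists B; split; [exact FB|].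
intros h [C [FC [CB hCB]]]; exists C; repeat split; auto.
intros x Cx; rewrite actM; auto.
Qed.

Lemma Delta_list_mulr (g : G) (l : list (X -> Prop)) :
  (forall A, In A l -> Delta act F A g) ->
  exists l', Forall F l' /\ forall h, (forall B, In B l' -> Delta act F B h) ->
    forall A, In A l -> Delta act F A (mul g h).
Proof.
induction l as [|A l IHl]; intros Hg.
- exists []; split; [constructor|]; intros h _ A [].
- destruct IHl as [l' [Fl' Hl']]; [intros A' HA'; apply Hg; right; exact HA'|].
  destruct (Delta_mulr A g (Hg A (or_introl eq_refl))) as [B [FB HB]].
  exists (B :: l'); split; [constructor; assumption|].
  intros h Hh A0 [<-|HA0].
  + apply HB, Hh; left; reflexivity.
  + apply Hl'; [intros B' HB'; apply Hh; right; exact HB'|exact HA0].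
Qed.

Lemma R_filter_shift (U : G -> Prop) : R_filter act F U ->
  R_filter act F (fun g => R_filter act F (fun h => U (mul g h))).
Proof.
intros [l [Fl HU]]; exists l; split; [exact Fl|].
intros g Hg; destruct (Delta_list_mulr g l Hg) as [l' [Fl' Hl']].
exists l'; split; [exact Fl'|]; intros h Hh; apply HU, Hl', Hh.
Qed.

End RFilter.

Theorem proposition5p5 (G X : Type) (mul : G -> G -> G) (inv : G -> G) (e : G)
  (act : G -> X -> X) (F : (X -> Prop) -> Prop) :
  is_group mul inv e -> is_left_action mul e act ->
  left_topological mul e (R_filter act F).
Proof.
intros [mulA [mul1g [mulg1 _]]] [act1 actM].
apply left_topological_filter; auto.
- exact (R_filter_top G X act F).
- exact (R_filter_and G X act F).
- exact (R_filter_mono G X act F).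
- exact (R_filter_id G X e act F act1).
- exact (R_filter_shift G X mul act F actM).
Qed.
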